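(* Let $P,PA$ be labelings, $c$ a command and $\rho_1,\rho_2,\mu_1,\mu_2$ states. Assume $\mathtt b\notin\mathrm{UsedVars}(c)$, $\rho_1(\mathtt b)=\rho_2(\mathtt b)=0$, $|a|_{\mu_1}>0$ and $|a|_{\mu_2}>0$ for every array $a$, $P;PA\vdash_{ct}c$, $\rho_1\sim_P\rho_2$ and $\mu_1\sim_{PA}\mu_2$. Then $\langle\mathrm{SvSLH}_P(c),\rho_1,\mu_1,\mathtt{false}\rangle\approx_s\langle\mathrm{SvSLH}_P(c),\rho_2,\mu_2,\mathtt{false}\rangle$.
   Context: Language AWhile: scalar variables $X\in\mathcal V$, arrays $a\in\mathcal A$; $e::=n\mid X\mid\mathrm{op}_{\mathbb N}(e,\dots,e)\mid be\,?\,e_1:e_2$; $be::=\mathtt{true}\mid\mathtt{false}\mid\mathrm{cmp}(e,e)\mid\mathrm{op}_{\mathbb B}(be,\dots,be)$; $c::=\mathtt{skip}\mid X:=e\mid c_1;c_2\mid\mathtt{if}\ be\ \mathtt{then}\ c_1\ \mathtt{else}\ c_2\mid\mathtt{while}\ be\ \mathtt{do}\ c\mid X\leftarrow a[e]\mid a[e]\leftarrow e'$. Scalar state $\rho:\mathcal V\to\mathbb N$; array state $\mu$ with sizes $|a|_\mu$ and values $\mu(a)[i]$; $[\![\cdot]\!]_\rho$ pure evaluation. $\mathrm{UsedVars}(c)$: scalar variables occurring in $c$; $\mathtt b$ a reserved scalar variable. Speculative semantics: configurations $\langle c,\rho,\mu,\beta\rangle$; steps labelled by optional observation ($\mathrm{branch}(v),\mathrm{read}(a,i),\mathrm{write}(a,i)$)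 and optional directive ($\mathit{step},\mathit{force},\mathrm{load}(a',j),\mathrm{store}(a',j)$). $X:=e\to\mathtt{skip}$ updating $X$; $c_1;c_2\to c_1';c_2$ if $c_1\to c_1'$; $\mathtt{skip};c\to c$; $\mathtt{while}\ be\ \mathtt{do}\ c\to\mathtt{if}\ be\ \mathtt{then}\ (c;\mathtt{while}\ be\ \mathtt{do}\ c)\ \mathtt{else}\ \mathtt{skip}$ (no obs, no directive, flag kept). Conditional: $\mathit{step}$ goes to branch $v=[\![be]\!]_\rho$; $\mathit{force}$ goes to branch $\neg v$ and sets $\beta:=\mathtt{true}$; obs $\mathrm{branch}(v)$. $X\leftarrow a[ie]$: with $\mathit{step}$ needs $i=[\![ie]\!]_\rho<|a|_\mu$, $X:=\mu(a)[i]$; with $\mathrm{load}(a',j)$ needs $\beta=\mathtt{true}$, $i\ge|a|_\mu$, $j<|a'|_\mu$, $X:=\mu(a')[j]$; obs $\mathrm{read}(a,i)$. $a[ie]\leftarrow e$: with $\mathit{step}$ needs $i<|a|_\mu$, $\mu[a[i]\mapsto[\![e]\!]_\rho]$; with $\mathrm{store}(a',j)$ needs $\beta=\mathtt{true}$, $i\ge|a|_\mu$, $j<|a'|_\mu$, $\mu[a'[j]\mapsto[\![e]\!]_\rho]$; obs $\mathrm{write}(a,i)$. $\langle c_1,\rho_1,\mu_1,\beta_1\rangle\approx_s\langle c_2,\rho_2,\mu_2,\beta_2\rangle$ iff for all $D,O_1,O_2$, whenever both multi-step with the same directive list $D$ producing $O_1,O_2$, $O_1=O_2$. Labels: $\mathtt{true}$=public,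 $\mathtt{false}$=secret; $\ell_1\sqsubseteq\ell_2$ iff $\ell_2=\mathtt{true}\Rightarrow\ell_1=\mathtt{true}$. $P(e),P(be)$ public iff all variables occurring are public. $\rho_1\sim_P\rho_2$: agreement on public scalar variables; $\mu_1\sim_{PA}\mu_2$: agreement on sizes and contents of public arrays. CCT typing $P;PA\vdash_{ct}c$: $\mathtt{skip}$; $X:=e$ if $P(e)\sqsubseteq P(X)$; $c_1;c_2$ if both typed; $\mathtt{if}$ if $P(be)=\mathtt{true}$ and both branches typed; $\mathtt{while}$ if $P(be)=\mathtt{true}$ and body typed; $X\leftarrow a[i]$ if $P(i)=\mathtt{true}$ and $PA(a)\sqsubseteq P(X)$; $a[i]\leftarrow e$ if $P(i)=\mathtt{true}$ and $P(e)\sqsubseteq PA(a)$. Transformation $\mathrm{SvSLH}_P$: $\mathtt{skip}$, $X:=e$, $a[i]\leftarrow e$ unchanged; sequences translated componentwise; $\mathtt{if}\ be\ \mathtt{then}\ c_1\ \mathtt{else}\ c_2\mapsto\mathtt{if}\ be\ \mathtt{then}\ (\mathtt b:=be\,?\,\mathtt b:1;[\![c_1]\!])\ \mathtt{else}\ (\mathtt b:=be\,?\,1:\mathtt b;[\![c_2]\!])$; $\mathtt{while}\ be\ \mathtt{do}\ c\mapsto(\mathtt{while}\ be\ \mathtt{do}\ (\mathtt b:=be\,?\,\mathtt b:1;[\![c]\!]));\ \mathtt b:=be\,?\,1:\mathtt b$; $X\leftarrow a[i]\mapsto(X\leftarrow a[i];\ X:=(\mathtt b==1)\,?\,0:X)$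 if $P(X)=\mathtt{true}$, and unchanged otherwise. *)

From Stdlib Require Import String List Bool Arith.
Import ListNotations.
Open Scope string_scope.

(* Scalar variables and arrays are both named by strings (separate namespaces). *)
Definition var := string.
Definition arr := string.

(* op_N is represented by an arbitrary binary function on nat,
   cmp by an arbitrary binary nat relation (bool-valued),
   op_B by arbitrary unary / binary boolean functions. *)
Inductive aexp : Type :=
  | ANum (n : nat)
  | AId (x : var)
  | ABin (op : nat -> nat -> nat) (e1 e2 : aexp)
  | ACTIf (be : bexp) (e1 e2 : aexp)
with bexp : Type :=
  | BTrue
  | BFalse
  | BCmp (cmp : nat -> nat -> bool) (e1 e2 : aexp)
  | BUn (op : bool -> bool) (be : bexp)
  | BBin (op : bool -> bool -> bool) (be1 be2 : bexp).

Inductive com : Type :=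
  | Skip
  | Asgn (x : var) (e : aexp)
  | Seq (c1 c2 : com)
  | If (be : bexp) (c1 c2 : com)
  | While (be : bexp) (c : com)
  | ARead (x : var) (a : arr) (i : aexp)
  | AWrite (a : arr) (i : aexp) (e : aexp).

Definition state := var -> nat.
Definition astate := arr -> list nat.           (* mu; |a|_mu = length (mu a) *)

Definition upd (rho : state) (x : var) (v : nat) : state :=
  fun y => if String.eqb x y then v else rho y.

Fixpoint aeval (rho : state) (e : aexp) : nat :=
  match e with
  | ANum n => n
  | AId x => rho x
  | ABin op e1 e2 => op (aeval rho e1) (aeval rho e2)
  | ACTIf be e1 e2 => if beval rho be then aeval rho e1 else aeval rho e2
  end
with beval (rho : state) (be : bexp) : bool :=
  match be with
  | BTrue => true
  | BFalse => false
  | BCmp cmp e1 e2 => cmp (aeval rho e1) (aeval rho e2)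
  | BUn op b1 => op (beval rho b1)
  | BBin op b1 b2 => op (beval rho b1) (beval rho b2)
  end.

Fixpoint list_upd (l : list nat) (i : nat) (v : nat) : list nat :=
  match l, i with
  | [], _ => []
  | _ :: t, 0 => v :: t
  | h :: t, S i' => h :: list_upd t i' v
  end.

Definition aupd (mu : astate) (a : arr) (i v : nat) : astate :=
  fun b => if String.eqb a b then list_upd (mu a) i v else mu b.

Inductive observation : Type :=
  | OBranch (v : bool)
  | ORead (a : arr) (i : nat)
  | OWrite (a : arr) (i : nat).

Inductive direction : Type :=
  | DStep
  | DForce
  | DLoad (a : arr) (j : nat)
  | DStore (a : arr) (j : nat).

Definition config : Type := (com * state * astate * bool)%type.

Inductive spec_step : config -> config -> option direction -> option observation -> Prop :=
  | SS_Asgn : forall x e rho mu bt,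
      spec_step (Asgn x e, rho, mu, bt) (Skip, upd rho x (aeval rho e), mu, bt) None None
  | SS_Seq : forall c1 c1' c2 rho mu bt rho' mu' bt' d o,
      spec_step (c1, rho, mu, bt) (c1', rho', mu', bt') d o ->
      spec_step (Seq c1 c2, rho, mu, bt) (Seq c1' c2, rho', mu', bt') d o
  | SS_SeqSkip : forall c rho mu bt,
      spec_step (Seq Skip c, rho, mu, bt) (c, rho, mu, bt) None None
  | SS_IfStep : forall be c1 c2 rho mu bt,
      spec_step (If be c1 c2, rho, mu, bt)
        ((if beval rho be then c1 else c2), rho, mu, bt)
        (Some DStep) (Some (OBranch (beval rho be)))
  | SS_IfForce : forall be c1 c2 rho mu bt,
      spec_step (If be c1 c2, rho, mu, bt)
        ((if beval rho be then c2 else c1), rho, mu, true)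
        (Some DForce) (Some (OBranch (beval rho be)))
  | SS_While : forall be c rho mu bt,
      spec_step (While be c, rho, mu, bt)
        (If be (Seq c (While be c)) Skip, rho, mu, bt) None None
  | SS_ARead : forall x a ie rho mu bt i,
      i = aeval rho ie -> i < length (mu a) ->
      spec_step (ARead x a ie, rho, mu, bt)
        (Skip, upd rho x (nth i (mu a) 0), mu, bt)
        (Some DStep) (Some (ORead a i))
  | SS_ARead_U : forall x a ie rho mu i a' j,
      i = aeval rho ie -> length (mu a) <= i -> j < length (mu a') ->
      spec_step (ARead x a ie, rho, mu, true)
        (Skip, upd rho x (nth j (mu a') 0), mu, true)
        (Some (DLoad a' j)) (Some (ORead a i))
  | SS_AWrite : forall a ie e rho mu bt i,
      i = aeval rho ie -> i < length (mu a) ->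
      spec_step (AWrite a ie e, rho, mu, bt)
        (Skip, rho, aupd mu a i (aeval rho e), bt)
        (Some DStep) (Some (OWrite a i))
  | SS_AWrite_U : forall a ie e rho mu i a' j,
      i = aeval rho ie -> length (mu a) <= i -> j < length (mu a') ->
      spec_step (AWrite a ie e, rho, mu, true)
        (Skip, rho, aupd mu a' j (aeval rho e), true)
        (Some (DStore a' j)) (Some (OWrite a i)).

Definition olist {A : Type} (o : option A) : list A :=
  match o with Some x => [x] | None => [] end.

Inductive multi_spec : config -> config -> list direction -> list observation -> Prop :=
  | MS_Refl : forall cf, multi_spec cf cf [] []
  | MS_Step : forall cf1 cf2 cf3 d o ds os,
      spec_step cf1 cf2 d o ->
      multi_spec cf2 cf3 ds os ->
      multi_spec cf1 cf3 (olist d ++ ds) (olist o ++ os).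

Definition spec_obs_equiv (cf1 cf2 : config) : Prop :=
  forall ds os1 os2 cf1' cf2',
    multi_spec cf1 cf1' ds os1 ->
    multi_spec cf2 cf2' ds os2 ->
    os1 = os2.

(* true = public, false = secret *)
Definition label := bool.
Definition pub_vars := var -> label.
Definition pub_arrs := arr -> label.

(* l1 ⊑ l2  iff  (l2 = public -> l1 = public) *)
Definition can_flow (l1 l2 : label) : bool := implb l2 l1.

Fixpoint label_of_aexp (P : pub_vars) (e : aexp) : label :=
  match e with
  | ANum _ => true
  | AId x => P x
  | ABin _ e1 e2 => label_of_aexp P e1 && label_of_aexp P e2
  | ACTIf be e1 e2 => label_of_bexp P be && label_of_aexp P e1 && label_of_aexp P e2
  end
with label_of_bexp (P : pub_vars) (be : bexp) : label :=
  match be with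
  | BTrue | BFalse => true
  | BCmp _ e1 e2 => label_of_aexp P e1 && label_of_aexp P e2
  | BUn _ b1 => label_of_bexp P b1
  | BBin _ b1 b2 => label_of_bexp P b1 && label_of_bexp P b2
  end.

Inductive ct_well_typed (P : pub_vars) (PA : pub_arrs) : com -> Prop :=
  | CT_Skip : ct_well_typed P PA Skip
  | CT_Asgn : forall x e,
      can_flow (label_of_aexp P e) (P x) = true ->
      ct_well_typed P PA (Asgn x e)
  | CT_Seq : forall c1 c2,
      ct_well_typed P PA c1 -> ct_well_typed P PA c2 ->
      ct_well_typed P PA (Seq c1 c2)
  | CT_If : forall be c1 c2,
      label_of_bexp P be = true ->
      ct_well_typed P PA c1 -> ct_well_typed P PA c2 ->
      ct_well_typed P PA (If be c1 c2)
  | CT_While : forall be c,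
      label_of_bexp P be = true -> ct_well_typed P PA c ->
      ct_well_typed P PA (While be c)
  | CT_ARead : forall x a i,
      label_of_aexp P i = true ->
      can_flow (PA a) (P x) = true ->
      ct_well_typed P PA (ARead x a i)
  | CT_AWrite : forall a i e,
      label_of_aexp P i = true ->
      can_flow (label_of_aexp P e) (PA a) = true ->
      ct_well_typed P PA (AWrite a i e).

Fixpoint vars_aexp (e : aexp) : list var :=
  match e with
  | ANum _ => []
  | AId x => [x]
  | ABin _ e1 e2 => vars_aexp e1 ++ vars_aexp e2
  | ACTIf be e1 e2 => vars_bexp be ++ vars_aexp e1 ++ vars_aexp e2
  end
with vars_bexp (be : bexp) : list var :=
  match be with
  | BTrue | BFalse => []
  | BCmp _ e1 e2 => vars_aexp e1 ++ vars_aexp e2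
  | BUn _ b1 => vars_bexp b1
  | BBin _ b1 b2 => vars_bexp b1 ++ vars_bexp b2
  end.

Fixpoint used_vars (c : com) : list var :=
  match c with
  | Skip => []
  | Asgn x e => x :: vars_aexp e
  | Seq c1 c2 => used_vars c1 ++ used_vars c2
  | If be c1 c2 => vars_bexp be ++ used_vars c1 ++ used_vars c2
  | While be c => vars_bexp be ++ used_vars c
  | ARead x _ i => x :: vars_aexp i
  | AWrite _ i e => vars_aexp i ++ vars_aexp e
  end.

Definition pub_equiv (P : pub_vars) (rho1 rho2 : state) : Prop :=
  forall x, P x = true -> rho1 x = rho2 x.

Definition apub_equiv (PA : pub_arrs) (mu1 mu2 : astate) : Prop :=
  forall a, PA a = true -> mu1 a = mu2 a.

(* the reserved misspeculation flag variable *)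
Definition msf : var := "b".

Fixpoint sel_slh (P : pub_vars) (c : com) : com :=
  match c with
  | Skip => Skip
  | Asgn x e => Asgn x e
  | Seq c1 c2 => Seq (sel_slh P c1) (sel_slh P c2)
  | If be c1 c2 =>
      If be (Seq (Asgn msf (ACTIf be (AId msf) (ANum 1))) (sel_slh P c1))
            (Seq (Asgn msf (ACTIf be (ANum 1) (AId msf))) (sel_slh P c2))
  | While be c1 =>
      Seq (While be (Seq (Asgn msf (ACTIf be (AId msf) (ANum 1))) (sel_slh P c1)))
          (Asgn msf (ACTIf be (ANum 1) (AId msf)))
  | ARead x a i =>
      if P x then
        Seq (ARead x a i)
            (Asgn x (ACTIf (BCmp Nat.eqb (AId msf) (ANum 1)) (ANum 0) (AId x)))
      else ARead x a i
  | AWrite a i e => AWrite a i e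
  end.

From Stdlib Require Import String List Bool Arith.

(* The two runs are compared by a lockstep simulation: whenever both runs are
   related and take a step under the same directive, they emit the same
   observation, reach the same command and flag, and are related again.  The
   relation says that public variables and the flag [b] agree, that [b = 1]
   while misspeculating, and that public arrays agree while not
   misspeculating.  Typing keeps branch conditions and indices public, and a
   public variable loaded from an array is masked to 0 whenever [b = 1], so
   only values of agreeing public arrays survive.  The relation breaks only
   while a single assignment is pending: after a forced branch, before the
   instrumentation sets [b := 1], and after a load into a public variable,
   before it is masked.  These transient configurations are added to the
   relation as an evaluation context around the pending assignment. *)

Scheme aexp_bexp_ind := Induction for aexp Sort Prop
with bexp_aexp_ind := Induction for bexp Sort Prop.
Combined Scheme aexp_bexp_mutind from aexp_bexp_ind, bexp_aexp_ind.

Lemma upd_eq (r : state) x v : upd r x v x = v.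
Proof. unfold upd; now rewrite String.eqb_refl. Qed.

Lemma upd_neq (r : state) x y v : x <> y -> upd r x v y = r y.
Proof. intro Hxy; unfold upd; now apply String.eqb_neq in Hxy as ->. Qed.

Lemma upd_shadow (r : state) x v w y : upd (upd r x v) x w y = upd r x w y.
Proof. unfold upd; now destruct (String.eqb x y). Qed.

Lemma eval_pub_equiv P r1 r2 : pub_equiv P r1 r2 ->
  (forall e, label_of_aexp P e = true -> aeval r1 e = aeval r2 e) /\
  (forall be, label_of_bexp P be = true -> beval r1 be = beval r2 be).
Proof.
  intro Hpub; apply aexp_bexp_mutind; simpl; intros;
    repeat match goal with H : _ && _ = true |- _ => apply andb_prop in H as [? ?] end;
    auto; f_equal; auto.
  rewrite H, H0, H1 by assumption; reflexivity.
Qed.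

Lemma aeval_pub_equiv P r1 r2 e :
  pub_equiv P r1 r2 -> label_of_aexp P e = true -> aeval r1 e = aeval r2 e.
Proof. intro Hpub; exact (proj1 (eval_pub_equiv P r1 r2 Hpub) e). Qed.

Lemma beval_pub_equiv P r1 r2 be :
  pub_equiv P r1 r2 -> label_of_bexp P be = true -> beval r1 be = beval r2 be.
Proof. intro Hpub; exact (proj2 (eval_pub_equiv P r1 r2 Hpub) be). Qed.

Lemma pub_equiv_upd P r1 r2 x v1 v2 : pub_equiv P r1 r2 ->
  (P x = true -> v1 = v2) -> pub_equiv P (upd r1 x v1) (upd r2 x v2).
Proof.
  intros Hpub Hv y Hy; destruct (String.eqb_spec x y) as [<- | Hxy].
  - rewrite !upd_eq; auto.
  - rewrite !upd_neq; auto.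
Qed.

Lemma apub_equiv_aupd PA m1 m2 a i v1 v2 : apub_equiv PA m1 m2 ->
  (PA a = true -> v1 = v2) -> apub_equiv PA (aupd m1 a i v1) (aupd m2 a i v2).
Proof.
  intros Hpub Hv b Hb; unfold aupd; destruct (String.eqb_spec a b) as [<- | ]; auto.
  rewrite Hpub, Hv; auto.
Qed.

(** * Lockstep simulations *)

(* Whether a step consumes a directive depends on the command alone, so two
   runs of the same command consume a directive list in lockstep. *)
Fixpoint silent_com (c : com) : Prop :=
  match c with
  | Asgn _ _ | While _ _ | Seq Skip _ => True
  | Seq c1 _ => silent_com c1
  | _ => False
  end.

Lemma spec_step_silent cf cf' d o :
  spec_step cf cf' d o -> d = None <-> silent_com (fst (fst (fst cf))).
Proof.
  induction 1; simpl; try (split; easy).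
  destruct c1; simpl in *; auto. inversion H.
Qed.

Lemma spec_step_observes cf cf' d o : spec_step cf cf' d o -> d = None <-> o = None.
Proof. induction 1; easy. Qed.

Lemma multi_spec_length cf cf' ds os : multi_spec cf cf' ds os -> length ds = length os.
Proof.
  induction 1 as [| cf1 cf2 cf3 d o ds os Hstep _ IH]; simpl; auto.
  rewrite !length_app, IH; f_equal.
  apply spec_step_observes in Hstep.
  destruct d, o; simpl; auto; exfalso; intuition discriminate.
Qed.

Definition pair_rel := com -> bool -> state -> astate -> state -> astate -> Prop.

Definition lockstep (R : pair_rel) c bt r1 m1 r2 m2 : Prop :=
  forall c1 r1' m1' bt1 c2 r2' m2' bt2 d o1 o2,
  spec_step (c, r1, m1, bt) (c1, r1', m1', bt1) d o1 ->
  spec_step (c, r2, m2, bt) (c2, r2', m2', bt2) d o2 ->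
  o1 = o2 /\ c1 = c2 /\ bt1 = bt2 /\ R c1 bt1 r1' m1' r2' m2'.

Section Lockstep.

Variable R : pair_rel.

Hypothesis R_lockstep : forall c bt r1 m1 r2 m2,
  R c bt r1 m1 r2 m2 -> lockstep R c bt r1 m1 r2 m2.

Lemma lockstep_multi_spec cf1 cf1' ds os1 : multi_spec cf1 cf1' ds os1 ->
  forall c bt r1 m1 r2 m2 cf2' os2, cf1 = (c, r1, m1, bt) -> R c bt r1 m1 r2 m2 ->
  multi_spec (c, r2, m2, bt) cf2' ds os2 -> os1 = os2.
Proof.
  induction 1 as [| cf1 [[[c' r1'] m1'] bt'] cf1' d o ds os Hstep1 Hmulti1 IH];
    intros c bt r1 m1 r2 m2 cf2' os2 -> HR Hmulti2.
  - apply multi_spec_length in Hmulti2; destruct os2; easy.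
  - remember (c, r2, m2, bt) as cf2 eqn:Ecf2.
    remember (olist d ++ ds) as ds0 eqn:Eds.
    destruct Hmulti2 as [| cf2 [[[c'' r2'] m2'] bt''] cf2' d' o' ds' os' Hstep2 Hmulti2'].
    + apply multi_spec_length in Hmulti1.
      destruct d; [discriminate |]; destruct o; [| destruct ds, os; easy].
      apply spec_step_observes in Hstep1; intuition discriminate.
    + subst cf2; assert (d = d' /\ ds = ds') as [-> ->].
      { assert (Hsilent : d = None <-> d' = None).
        { rewrite (spec_step_silent _ _ _ _ Hstep1), (spec_step_silent _ _ _ _ Hstep2).
          reflexivity. }
        destruct d, d'; simpl in Eds;
          [injection Eds as -> -> | exfalso; intuition discriminate .. | auto]; auto. }
      destruct (R_lockstep _ _ _ _ _ _ HR _ _ _ _ _ _ _ _ _ _ _ Hstep1 Hstep2)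
        as (-> & -> & -> & HR').
      f_equal; eauto.
Qed.

Lemma lockstep_obs_equiv c bt r1 m1 r2 m2 :
  R c bt r1 m1 r2 m2 -> spec_obs_equiv (c, r1, m1, bt) (c, r2, m2, bt).
Proof. intros HR ds os1 os2 cf1' cf2' H1 H2; eapply lockstep_multi_spec; eauto. Qed.

End Lockstep.

(** * The hardened programs *)

Definition msf_then (be : bexp) : com := Asgn msf (ACTIf be (AId msf) (ANum 1)).
Definition msf_else (be : bexp) : com := Asgn msf (ACTIf be (ANum 1) (AId msf)).
Definition masked (x : var) : aexp :=
  ACTIf (BCmp Nat.eqb (AId msf) (ANum 1)) (ANum 0) (AId x).
Definition mask (x : var) : com := Asgn x (masked x).
Definition hwhile (be : bexp) (c : com) : com := While be (Seq (msf_then be) c).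

Inductive ectx : Type :=
  | Hole
  | SeqL (E : ectx) (c : com).

Fixpoint plug (E : ectx) (h : com) : com :=
  match E with
  | Hole => h
  | SeqL E c => Seq (plug E h) c
  end.

Fixpoint ectx_comp (E E' : ectx) : ectx :=
  match E with
  | Hole => E'
  | SeqL E c => SeqL (ectx_comp E E') c
  end.

Lemma plug_comp E E' h : plug (ectx_comp E E') h = plug E (plug E' h).
Proof. induction E; simpl; congruence. Qed.

Lemma plug_skip E h : plug E h = Skip -> h = Skip.
Proof. destruct E; simpl; congruence. Qed.

Lemma com_skip_dec c : c = Skip \/ c <> Skip.
Proof. destruct c; [left | right; discriminate ..]; reflexivity. Qed.

Lemma no_step_skip r m bt cf d o : ~ spec_step (Skip, r, m, bt) cf d o.
Proof. inversion 1. Qed.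

Lemma plug_step E h r m bt c' r' m' bt' d o : h <> Skip ->
  spec_step (plug E h, r, m, bt) (c', r', m', bt') d o ->
  exists h', spec_step (h, r, m, bt) (h', r', m', bt') d o /\ c' = plug E h'.
Proof.
  intro Hh; revert c'; induction E as [| E IH c]; simpl; intros c' Hstep; eauto.
  inversion Hstep as [| ? ? ? ? ? ? ? ? ? ? ? Hinner | ? ? ? ? Hskip | | | | | | |]; subst.
  - destruct (IH _ Hinner) as (h' & Hh' & ->); eauto.
  - symmetry in Hskip; apply plug_skip in Hskip; contradiction.
Qed.

Lemma spec_step_if be ct cf r m bt c' r' m' bt' d o :
  spec_step (If be ct cf, r, m, bt) (c', r', m', bt') d o ->
  r' = r /\ m' = m /\ o = Some (OBranch (beval r be)) /\
  ((d = Some DStep /\ bt' = bt /\ c' = if beval r be then ct else cf) \/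
   (d = Some DForce /\ bt' = true /\ c' = if beval r be then cf else ct)).
Proof. inversion 1; subst; auto 7. Qed.

Section Hardened.

Variables (P : pub_vars) (PA : pub_arrs).

(* Besides the images of [sel_slh], this contains the residues that a running
   loop leaves behind. *)
Inductive hardened : com -> Prop :=
  | H_skip : hardened Skip
  | H_asgn x e : x <> msf -> can_flow (label_of_aexp P e) (P x) = true ->
      hardened (Asgn x e)
  | H_msf_then be : label_of_bexp P be = true -> hardened (msf_then be)
  | H_msf_else be : label_of_bexp P be = true -> hardened (msf_else be)
  | H_read_secret x a i : x <> msf -> label_of_aexp P i = true -> P x = false ->
      hardened (ARead x a i)
  | H_read_public x a i : x <> msf -> label_of_aexp P i = true -> PA a = true ->
      hardened (Seq (ARead x a i) (mask x))
  | H_write a i e : label_of_aexp P i = true ->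
      can_flow (label_of_aexp P e) (PA a) = true -> hardened (AWrite a i e)
  | H_seq c1 c2 : hardened c1 -> hardened c2 -> hardened (Seq c1 c2)
  | H_if be c1 c2 : label_of_bexp P be = true -> hardened c1 -> hardened c2 ->
      hardened (If be (Seq (msf_then be) c1) (Seq (msf_else be) c2))
  | H_while be c : label_of_bexp P be = true -> hardened c ->
      hardened (Seq (hwhile be c) (msf_else be))
  | H_while_unfolded be c : label_of_bexp P be = true -> hardened c ->
      hardened (Seq (If be (Seq (Seq (msf_then be) c) (hwhile be c)) Skip) (msf_else be))
  | H_while_body be c r : label_of_bexp P be = true -> hardened c -> hardened r ->
      hardened (Seq (Seq r (hwhile be c)) (msf_else be)).

Lemma hardened_sel_slh c :
  ct_well_typed P PA c -> ~ In msf (used_vars c) -> hardened (sel_slh P c).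
Proof.
  induction 1 as [| x e Hflow | c1 c2 _ IH1 _ IH2 | be c1 c2 Hbe _ IH1 _ IH2
                  | be c Hbe _ IH | x a i Hi Hflow | a i e Hi Hflow];
    simpl; intro Hmsf; rewrite ?in_app_iff in Hmsf.
  - constructor.
  - constructor; auto.
  - constructor; [apply IH1 | apply IH2]; tauto.
  - constructor; [| apply IH1 | apply IH2]; tauto.
  - apply (H_while be (sel_slh P c)); auto.
  - destruct (P x) eqn:HPx.
    + destruct (PA a) eqn:HPA; try discriminate.
      apply H_read_public; auto; intros ->; tauto.
    + apply H_read_secret; auto; intros ->; tauto.
  - constructor; auto.
Qed.

Inductive hardened_ectx : ectx -> Prop :=
  | HE_hole : hardened_ectx Hole
  | HE_seq E c : hardened_ectx E -> hardened c -> hardened_ectx (SeqL E c)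
  | HE_while E be c : hardened_ectx E -> label_of_bexp P be = true -> hardened c ->
      hardened_ectx (SeqL (SeqL E (hwhile be c)) (msf_else be)).

Lemma hardened_plug E h : hardened_ectx E -> hardened h -> hardened (plug E h).
Proof. intros HE Hh; induction HE; simpl; [| apply H_seq | apply H_while_body]; auto. Qed.

Lemma hardened_ectx_comp E E' :
  hardened_ectx E -> hardened_ectx E' -> hardened_ectx (ectx_comp E E').
Proof. intros HE HE'; induction HE; simpl; [| apply HE_seq | apply HE_while]; auto. Qed.

Record low_equiv (bt : bool) (r1 : state) (m1 : astate) (r2 : state) (m2 : astate) : Prop := {
  low_pub : pub_equiv P r1 r2;
  low_msf : r1 msf = r2 msf;
  low_misspec : bt = true -> r1 msf = 1;
  low_arrs : bt = false -> apub_equiv PA m1 m2 }.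

Arguments low_pub {bt r1 m1 r2 m2}.
Arguments low_msf {bt r1 m1 r2 m2}.
Arguments low_misspec {bt r1 m1 r2 m2}.
Arguments low_arrs {bt r1 m1 r2 m2}.

Lemma low_equiv_ext bt r1 m1 r2 m2 r1' r2' :
  (forall y, r1 y = r1' y) -> (forall y, r2 y = r2' y) ->
  low_equiv bt r1 m1 r2 m2 -> low_equiv bt r1' m1 r2' m2.
Proof.
  intros E1 E2 [Hpub Hmsf Hspec Harrs]; split; auto.
  - intros y Hy; rewrite <- E1, <- E2; auto.
  - rewrite <- E1, <- E2; auto.
  - rewrite <- E1; auto.
Qed.

Lemma low_equiv_upd bt r1 m1 r2 m2 x v1 v2 :
  low_equiv bt r1 m1 r2 m2 -> x <> msf -> (P x = true -> v1 = v2) ->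
  low_equiv bt (upd r1 x v1) m1 (upd r2 x v2) m2.
Proof.
  intros [Hpub Hmsf Hspec Harrs] Hx Hv; split; rewrite ?upd_neq by auto; auto.
  apply pub_equiv_upd; auto.
Qed.

Lemma low_equiv_upd_msf bt r1 m1 r2 m2 v1 v2 :
  low_equiv bt r1 m1 r2 m2 -> v1 = v2 -> (bt = true -> v1 = 1) ->
  low_equiv bt (upd r1 msf v1) m1 (upd r2 msf v2) m2.
Proof.
  intros [Hpub Hmsf Hspec Harrs] <- Hv; split; rewrite ?upd_eq; auto.
  apply pub_equiv_upd; auto.
Qed.

Lemma low_equiv_misspeculate r1 m1 r2 m2 :
  pub_equiv P r1 r2 -> low_equiv true (upd r1 msf 1) m1 (upd r2 msf 1) m2.
Proof. intro Hpub; split; rewrite ?upd_eq; auto using pub_equiv_upd; discriminate. Qed.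

Lemma low_equiv_mask bt r1 m1 r2 m2 x v1 v2 :
  low_equiv bt r1 m1 r2 m2 -> x <> msf -> (r1 msf <> 1 -> v1 = v2) ->
  low_equiv bt (upd (upd r1 x v1) x (aeval (upd r1 x v1) (masked x))) m1
               (upd (upd r2 x v2) x (aeval (upd r2 x v2) (masked x))) m2.
Proof.
  intros Hlow Hx Hv.
  apply low_equiv_ext with (r1 := upd r1 x (if Nat.eqb (r1 msf) 1 then 0 else v1))
                           (r2 := upd r2 x (if Nat.eqb (r2 msf) 1 then 0 else v2));
    try (intro y; rewrite upd_shadow; simpl; rewrite (upd_neq _ _ msf), upd_eq by auto; reflexivity).
  apply low_equiv_upd; auto.
  rewrite <- (low_msf Hlow).
  destruct (Nat.eqb_spec (r1 msf) 1); auto.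
Qed.

Inductive slh_rel : pair_rel :=
  | SR_low c bt r1 m1 r2 m2 :
      hardened c -> low_equiv bt r1 m1 r2 m2 -> slh_rel c bt r1 m1 r2 m2
  | SR_pending E h x e bt r1 m1 r2 m2 :
      hardened_ectx E -> (h = Asgn x e \/ h = Seq Skip (Asgn x e)) ->
      low_equiv bt (upd r1 x (aeval r1 e)) m1 (upd r2 x (aeval r2 e)) m2 ->
      slh_rel (plug E h) bt r1 m1 r2 m2.

Lemma slh_rel_plug E c bt r1 m1 r2 m2 :
  hardened_ectx E -> slh_rel c bt r1 m1 r2 m2 -> slh_rel (plug E c) bt r1 m1 r2 m2.
Proof.
  intros HE [c' ? ? ? ? ? Hc Hlow | E' h x e ? ? ? ? ? HE' Hh Hlow].
  - apply SR_low; auto using hardened_plug.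
  - rewrite <- plug_comp; eapply SR_pending; eauto using hardened_ectx_comp.
Qed.

Lemma pending_lockstep E h x e bt r1 m1 r2 m2 :
  hardened_ectx E -> (h = Asgn x e \/ h = Seq Skip (Asgn x e)) ->
  low_equiv bt (upd r1 x (aeval r1 e)) m1 (upd r2 x (aeval r2 e)) m2 ->
  lockstep slh_rel (plug E h) bt r1 m1 r2 m2.
Proof.
  intros HE Hh Hlow c1 r1' m1' bt1 c2 r2' m2' bt2 d o1 o2 S1 S2.
  assert (h <> Skip) by (destruct Hh; subst; discriminate).
  apply plug_step in S1 as (h1 & S1 & ->); auto.
  apply plug_step in S2 as (h2 & S2 & ->); auto.
  destruct Hh as [-> | ->].
  - inversion S1; subst; inversion S2; subst.
    repeat split; auto; apply SR_low; auto using hardened_plug, H_skip.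
  - inversion S1; subst; [exfalso; eapply no_step_skip; eauto |].
    inversion S2; subst; [exfalso; eapply no_step_skip; eauto |].
    repeat split; auto; eapply SR_pending; eauto.
Qed.

Lemma read_public_lockstep x a i bt r1 m1 r2 m2 :
  x <> msf -> label_of_aexp P i = true -> PA a = true -> low_equiv bt r1 m1 r2 m2 ->
  lockstep slh_rel (Seq (ARead x a i) (mask x)) bt r1 m1 r2 m2.
Proof.
  intros Hx Hi HPA Hlow c1 r1' m1' bt1 c2 r2' m2' bt2 d o1 o2 S1 S2.
  assert (Hidx : aeval r1 i = aeval r2 i) by exact (aeval_pub_equiv _ _ _ _ (low_pub Hlow) Hi).
  inversion S1 as [| ? ? ? ? ? ? ? ? ? ? ? S1' | | | | | | | |]; subst.
  inversion S2 as [| ? ? ? ? ? ? ? ? ? ? ? S2' | | | | | | | |]; subst.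
  inversion S1'; subst; inversion S2'; subst; rewrite Hidx;
    repeat split; apply (SR_pending Hole (Seq Skip (mask x)) x (masked x)); auto using HE_hole;
    apply low_equiv_mask; auto; intro Hnot1.
  - rewrite (low_arrs Hlow); auto.
    apply not_true_is_false; intro Hbt; exact (Hnot1 (low_misspec Hlow Hbt)).
  - contradiction (low_misspec Hlow eq_refl).
Qed.

Lemma if_lockstep be c1 c2 bt r1 m1 r2 m2 :
  label_of_bexp P be = true -> hardened c1 -> hardened c2 -> low_equiv bt r1 m1 r2 m2 ->
  lockstep slh_rel (If be (Seq (msf_then be) c1) (Seq (msf_else be) c2)) bt r1 m1 r2 m2.
Proof.
  intros Hbe Hc1 Hc2 Hlow c1' r1' m1' bt1 c2' r2' m2' bt2 d o1 o2 S1 S2.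
  assert (Hcond : beval r1 be = beval r2 be) by exact (beval_pub_equiv _ _ _ _ (low_pub Hlow) Hbe).
  apply spec_step_if in S1 as (-> & -> & -> & [(-> & -> & ->) | (-> & -> & ->)]);
    apply spec_step_if in S2 as (-> & -> & -> & [(Hd & -> & ->) | (Hd & -> & ->)]);
    try discriminate; rewrite <- Hcond;
    destruct (beval r1 be) eqn:Hb1; symmetry in Hcond; repeat split.
  - apply SR_low; auto using H_seq, H_msf_then.
  - apply SR_low; auto using H_seq, H_msf_else.
  - apply (SR_pending (SeqL Hole c2) (msf_else be) msf (ACTIf be (ANum 1) (AId msf)));
      auto using HE_seq, HE_hole.
    simpl; rewrite Hb1, Hcond; apply low_equiv_misspeculate, (low_pub Hlow).
  - apply (SR_pending (SeqL Hole c1) (msf_then be) msf (ACTIf be (AId msf) (ANum 1)));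
      auto using HE_seq, HE_hole.
    simpl; rewrite Hb1, Hcond; apply low_equiv_misspeculate, (low_pub Hlow).
Qed.

Lemma while_unfolded_lockstep be c bt r1 m1 r2 m2 :
  label_of_bexp P be = true -> hardened c -> low_equiv bt r1 m1 r2 m2 ->
  lockstep slh_rel
    (Seq (If be (Seq (Seq (msf_then be) c) (hwhile be c)) Skip) (msf_else be))
    bt r1 m1 r2 m2.
Proof.
  intros Hbe Hc Hlow c1 r1' m1' bt1 c2 r2' m2' bt2 d o1 o2 S1 S2.
  assert (Hcond : beval r1 be = beval r2 be) by exact (beval_pub_equiv _ _ _ _ (low_pub Hlow) Hbe).
  inversion S1 as [| ? ? ? ? ? ? ? ? ? ? ? S1' | | | | | | | |]; subst.
  inversion S2 as [| ? ? ? ? ? ? ? ? ? ? ? S2' | | | | | | | |]; subst.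
  apply spec_step_if in S1' as (-> & -> & -> & [(-> & -> & ->) | (-> & -> & ->)]);
    apply spec_step_if in S2' as (-> & -> & -> & [(Hd & -> & ->) | (Hd & -> & ->)]);
    try discriminate; rewrite <- Hcond;
    destruct (beval r1 be) eqn:Hb1; symmetry in Hcond; repeat split.
  - apply SR_low; auto using H_while_body, H_seq, H_msf_then.
  - apply SR_low; auto using H_seq, H_skip, H_msf_else.
  - apply (SR_pending Hole (Seq Skip (msf_else be)) msf (ACTIf be (ANum 1) (AId msf)));
      auto using HE_hole.
    simpl; rewrite Hb1, Hcond; apply low_equiv_misspeculate, (low_pub Hlow).
  - apply (SR_pending (SeqL (SeqL (SeqL Hole c) (hwhile be c)) (msf_else be)) (msf_then be)
             msf (ACTIf be (AId msf) (ANum 1)));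
      auto using HE_while, HE_seq, HE_hole.
    simpl; rewrite Hb1, Hcond; apply low_equiv_misspeculate, (low_pub Hlow).
Qed.

Lemma plug_lockstep E c bt r1 m1 r2 m2 :
  hardened_ectx E -> c <> Skip -> lockstep slh_rel c bt r1 m1 r2 m2 ->
  lockstep slh_rel (plug E c) bt r1 m1 r2 m2.
Proof.
  intros HE Hc Hstep c1 r1' m1' bt1 c2 r2' m2' bt2 d o1 o2 S1 S2.
  apply plug_step in S1 as (h1 & S1 & ->); auto.
  apply plug_step in S2 as (h2 & S2 & ->); auto.
  destruct (Hstep _ _ _ _ _ _ _ _ _ _ _ S1 S2) as (-> & -> & -> & Hrel).
  repeat split; auto using slh_rel_plug.
Qed.

Lemma skip_seq_lockstep E c bt r1 m1 r2 m2 :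
  hardened (plug E c) -> low_equiv bt r1 m1 r2 m2 ->
  lockstep slh_rel (plug E (Seq Skip c)) bt r1 m1 r2 m2.
Proof.
  intros Hc Hlow c1 r1' m1' bt1 c2 r2' m2' bt2 d o1 o2 S1 S2.
  apply plug_step in S1 as (h1 & S1 & ->); [| discriminate].
  apply plug_step in S2 as (h2 & S2 & ->); [| discriminate].
  inversion S1; subst; [exfalso; eapply no_step_skip; eauto |].
  inversion S2; subst; [exfalso; eapply no_step_skip; eauto |].
  repeat split; apply SR_low; auto.
Qed.

Lemma hardened_lockstep c bt r1 m1 r2 m2 :
  hardened c -> low_equiv bt r1 m1 r2 m2 -> lockstep slh_rel c bt r1 m1 r2 m2.
Proof.
  intros Hc; revert bt r1 m1 r2 m2.
  induction Hc as [| x e Hx Hflow | be Hbe | be Hbe | x a i Hx Hi HPx | x a i Hx Hi HPA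
                  | a i e Hi Hflow | c1 c2 _ IH1 Hc2 _ | be c1 c2 Hbe Hc1 _ Hc2 _
                  | be c Hbe Hc _ | be c Hbe Hc _ | be c r Hbe Hc _ _ IH];
    intros bt r1 m1 r2 m2 Hlow;
    pose proof (fun e => aeval_pub_equiv P r1 r2 e (low_pub Hlow)) as Ha;
    pose proof (fun be => beval_pub_equiv P r1 r2 be (low_pub Hlow)) as Hb.
  - intros ? ? ? ? ? ? ? ? ? ? ? S1; inversion S1.
  - apply (pending_lockstep Hole _ x e); auto using HE_hole.
    apply low_equiv_upd; auto.
    intro HPx; rewrite HPx in Hflow; auto.
  - apply (pending_lockstep Hole _ msf (ACTIf be (AId msf) (ANum 1))); auto using HE_hole.
    apply low_equiv_upd_msf; simpl; auto.
    + rewrite Hb, (low_msf Hlow); auto.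
    + intro Hbt; pose proof (low_misspec Hlow Hbt); destruct (beval r1 be); auto.
  - apply (pending_lockstep Hole _ msf (ACTIf be (ANum 1) (AId msf))); auto using HE_hole.
    apply low_equiv_upd_msf; simpl; auto.
    + rewrite Hb, (low_msf Hlow); auto.
    + intro Hbt; pose proof (low_misspec Hlow Hbt); destruct (beval r1 be); auto.
  - intros ? ? ? ? ? ? ? ? ? ? ? S1 S2.
    inversion S1; subst; inversion S2; subst; rewrite Ha by auto; repeat split;
      (apply SR_low; [apply H_skip | apply low_equiv_upd; auto; congruence]).
  - apply read_public_lockstep; auto.
  - intros ? ? ? ? ? ? ? ? ? ? ? S1 S2.
    inversion S1; subst; inversion S2; subst; rewrite Ha by auto; repeat split;
      (apply SR_low; [apply H_skip | destruct Hlow; split; auto; try discriminate]).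
    intros ->; apply apub_equiv_aupd; auto.
    intro HPA; rewrite HPA in Hflow; auto.
  - destruct (com_skip_dec c1) as [-> | Hnskip].
    + apply (skip_seq_lockstep Hole); auto.
    + apply (plug_lockstep (SeqL Hole c2)); auto using HE_seq, HE_hole.
  - apply if_lockstep; auto.
  - intros ? ? ? ? ? ? ? ? ? ? ? S1 S2.
    inversion S1 as [| ? ? ? ? ? ? ? ? ? ? ? S1' | | | | | | | |]; subst;
      inversion S2 as [| ? ? ? ? ? ? ? ? ? ? ? S2' | | | | | | | |]; subst.
    inversion S1'; subst; inversion S2'; subst.
    repeat split; apply SR_low; auto using H_while_unfolded.
  - apply while_unfolded_lockstep; auto.
  - destruct (com_skip_dec r) as [-> | Hnskip].
    + apply (skip_seq_lockstep (SeqL Hole (msf_else be))); simpl; auto using H_while.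
    + apply (plug_lockstep (SeqL (SeqL Hole (hwhile be c)) (msf_else be)));
        auto using HE_while, HE_hole.
Qed.

Lemma slh_rel_lockstep c bt r1 m1 r2 m2 :
  slh_rel c bt r1 m1 r2 m2 -> lockstep slh_rel c bt r1 m1 r2 m2.
Proof.
  destruct 1; [apply hardened_lockstep | eapply pending_lockstep]; eauto.
Qed.

End Hardened.

Theorem theorem6p2 :
  forall (P : pub_vars) (PA : pub_arrs) (c : com)
         (rho1 rho2 : state) (mu1 mu2 : astate),
    ~ In msf (used_vars c) ->
    rho1 msf = 0 -> rho2 msf = 0 ->
    (forall a, 0 < length (mu1 a)) ->
    (forall a, 0 < length (mu2 a)) ->
    ct_well_typed P PA c ->
    pub_equiv P rho1 rho2 ->
    apub_equiv PA mu1 mu2 ->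
    spec_obs_equiv (sel_slh P c, rho1, mu1, false) (sel_slh P c, rho2, mu2, false).
Proof.
  (* The runs are compared step by step. *)
  intros P PA c rho1 rho2 mu1 mu2 Hmsf Hb1 Hb2 _ _ Hwt Hpub Harrs.
  apply (lockstep_obs_equiv (slh_rel P PA)); [exact (slh_rel_lockstep P PA) |].
  apply SR_low; [apply hardened_sel_slh; auto |].
  split; auto; [congruence | discriminate].
Qed.
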